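(* For all integers $2\le k\le n$, $$2kn+k\le \gamma_t(G_k\Box G_n)\le 2kn+2k.$$
   Context: For $m\ge 1$, $G_m$ is the graph with vertex set $\{a_1,\ldots,a_m\}\cup\{b_1,\ldots,b_m\}\cup\{c_1,\ldots,c_m\}$ in which $\{a_1,\ldots,a_m\}$ forms a clique, each $b_i$ is adjacent to $a_i$ and to $c_i$, and there are no other edges (i.e. $K_m$ with a path $P_3$ attached by an end-vertex at each clique vertex). $\gamma_t$ denotes the total domination number (minimum size of a set $S$ of vertices such that every vertex of the graph has a neighbor in $S$). $G\Box H$ is the Cartesian product: vertex set $V(G)\times V(H)$, with $(u_1,v_1)\sim(u_2,v_2)$ iff either $u_1=u_2$ and $v_1v_2\in E(H)$, or $v_1=v_2$ and $u_1u_2\in E(G)$. *)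

From mathcomp Require Import all_boot all_order.
Set Implicit Arguments. Unset Strict Implicit. Unset Printing Implicit Defensive.

(* Vertices of G_m: (0,i) = a_i, (1,i) = b_i, (2,i) = c_i, for i : 'I_m. *)
Definition Gm_vertex (m : nat) : finType := ('I_3 * 'I_m)%type.

(* Adjacency of G_m: {a_i} a clique, b_i ~ a_i, b_i ~ c_i, nothing else. *)
Definition Gm_adj (m : nat) : rel (Gm_vertex m) :=
  fun u v =>
    [|| [&& val u.1 == 0, val v.1 == 0 & u.2 != v.2],
        [&& u.2 == v.2, val u.1 == 0 & val v.1 == 1],
        [&& u.2 == v.2, val u.1 == 1 & val v.1 == 0],
        [&& u.2 == v.2, val u.1 == 1 & val v.1 == 2]
      | [&& u.2 == v.2, val u.1 == 2 & val v.1 == 1] ].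

Definition cart_adj (T1 T2 : finType) (e1 : rel T1) (e2 : rel T2) : rel (T1 * T2) :=
  fun x y => ((x.1 == y.1) && e2 x.2 y.2) || ((x.2 == y.2) && e1 x.1 y.1).

Definition total_dominating (T : finType) (e : rel T) (S : {set T}) : bool :=
  [forall v, exists u, (u \in S) && e v u].

(* Total domination number: minimum size of a total dominating set
   (defaults to #|T| if none exists, which never happens for graphs
   without isolated vertices). *)
Definition gamma_t (T : finType) (e : rel T) : nat :=
  \big[minn/#|T|]_(S : {set T} | total_dominating e S) #|S|.

From mathcomp Require Import all_boot all_order.
Import Order.TTheory.
Set Implicit Arguments. Unset Strict Implicit. Unset Printing Implicit Defensive.

(* Split the vertices of G_k □ G_n into kn cells {a_i, b_i, c_i} × {a_j, b_j, c_j}.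
   The vertices (c_i, c_j), (b_i, c_j) and (c_i, b_j) have all their neighbours inside
   their own cell, which forces every total dominating set S to meet each cell at least
   twice.  The neighbourhoods of (c_i, a_j) and (a_i, c_j) leave the cell only along its
   row or its column, and a case analysis shows that a cell meeting S exactly twice shares
   a row or a column with a cell meeting S at least three times.  So either every row or
   every column contains such a heavy cell, whence |S| >= 2kn + min(k, n).  For the upper
   bound, two vertices per cell plus two more in every cell of one column suffice. *)

Lemma total_dominatingP (T : finType) (e : rel T) (S : {set T}) :
  reflect (forall v, exists2 u, u \in S & e v u) (total_dominating e S).
Proof.
apply: (iffP forallP) => [dom v | dom v]; last first.
  by have [u uS evu] := dom v; apply/existsP; exists u; rewrite uS.
by have /existsP[u /andP[uS evu]] := dom v; exists u.
Qed.

Lemma gamma_t_le (T : finType) (e : rel T) (S : {set T}) :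
  total_dominating e S -> gamma_t e <= #|S|.
Proof. by move=> domS; rewrite /gamma_t -minEnat -leEnat bigmin_le_cond. Qed.

Lemma gamma_t_ge (T : finType) (e : rel T) (S0 : {set T}) (m : nat) :
  total_dominating e S0 -> (forall S, total_dominating e S -> m <= #|S|) ->
  m <= gamma_t e.
Proof.
move=> domS0 mS; have mT : m <= #|T| := leq_trans (mS S0 domS0) (max_card _).
by rewrite /gamma_t -minEnat -leEnat le_bigmin.
Qed.

Section GmVertices.
Variable m : nat.
Implicit Types (i : 'I_m) (u : Gm_vertex m).

Definition vtxA i : Gm_vertex m := (ord0, i).
Definition vtxB i : Gm_vertex m := (Ordinal (isT : 1 < 3), i).
Definition vtxC i : Gm_vertex m := (ord_max, i).

Variant Gm_vertex_spec : Gm_vertex m -> Prop :=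
  | GmA i : Gm_vertex_spec (vtxA i)
  | GmB i : Gm_vertex_spec (vtxB i)
  | GmC i : Gm_vertex_spec (vtxC i).

Lemma Gm_vertexP u : Gm_vertex_spec u.
Proof.
case: u => [x i].
have [->|->|->] : [\/ x = ord0, x = Ordinal (isT : 1 < 3) | x = ord_max].
  by case: x => [[|[|[|//]]] ?]; [constructor 1 | constructor 2 | constructor 3];
    apply: val_inj.
- exact: GmA.
- exact: GmB.
- exact: GmC.
Qed.

Lemma Gm_adjA i u :
  Gm_adj (vtxA i) u = (u == vtxB i) || [exists i', (i' != i) && (u == vtxA i')].
Proof.
have -> : [exists i', (i' != i) && (u == vtxA i')] = (val u.1 == 0) && (u.2 != i).
  apply/existsP/andP => [[i' /andP[ne /eqP->]] | [/eqP u1 ne]] //.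
  exists u.2; rewrite ne; case: u u1 ne => [[[|//] ?] ?] _ _.
  by apply/eqP; congr (_, _); apply: val_inj.
case: u => [[[|[|[|//]]] ?] i'];
by rewrite /Gm_adj /vtxA /vtxB /= ?xpair_eqE -?val_eqE /= ?andbF ?andbT ?orbF // eq_sym.
Qed.

Lemma Gm_adjB i u : Gm_adj (vtxB i) u = (u == vtxA i) || (u == vtxC i).
Proof.
case: u => [[[|[|[|//]]] ?] i'];
by rewrite /Gm_adj /vtxA /vtxB /vtxC /= ?xpair_eqE -?val_eqE /= ?andbF ?andbT ?orbF //
  eq_sym.
Qed.

Lemma Gm_adjC i u : Gm_adj (vtxC i) u = (u == vtxB i).
Proof.
case: u => [[[|[|[|//]]] ?] i'];
by rewrite /Gm_adj /vtxB /vtxC /= ?xpair_eqE -?val_eqE /= ?andbF ?andbT ?orbF // eq_sym.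
Qed.

End GmVertices.

Definition cell_count k n (S : {set Gm_vertex k * Gm_vertex n}) (i : 'I_k) (j : 'I_n) :
    nat :=
  \sum_(x : 'I_3) \sum_(y : 'I_3) (((x, i), (y, j)) \in S : nat).

Lemma card_cell_count k n (S : {set Gm_vertex k * Gm_vertex n}) :
  #|S| = \sum_i \sum_j cell_count S i j.
Proof.
rewrite -sum1_card big_mkcond /=.
rewrite (eq_bigr (fun v => (((v.1.1, v.1.2), (v.2.1, v.2.2)) \in S : nat))); last first.
  by move=> [[x i] [y j]] _; case: (_ \in S).
rewrite -(pair_bigA _ (fun p q => (((p.1, p.2), (q.1, q.2)) \in S : nat))).
rewrite -(pair_bigA _ (fun x i => \sum_q (((x, i), (q.1, q.2)) \in S : nat))).
rewrite exchange_big; apply: eq_bigr => i _ /=.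
under eq_bigr do
  rewrite -(pair_bigA _ (fun y j => (((_, i), (y, j)) \in S : nat))) exchange_big.
by rewrite exchange_big.
Qed.

Lemma sum_ord3 (F : 'I_3 -> nat) :
  \sum_x F x = F ord0 + F (Ordinal (isT : 1 < 3)) + F ord_max.
Proof.
by rewrite !big_ord_recl big_ord0 addn0 addnA; congr (_ + F _ + F _); apply: val_inj.
Qed.

Lemma cell_countE k n (S : {set Gm_vertex k * Gm_vertex n}) i j : cell_count S i j =
  ((vtxA i, vtxA j) \in S) + ((vtxA i, vtxB j) \in S) + ((vtxA i, vtxC j) \in S) +
  ((vtxB i, vtxA j) \in S) + ((vtxB i, vtxB j) \in S) + ((vtxB i, vtxC j) \in S) +
  ((vtxC i, vtxA j) \in S) + ((vtxC i, vtxB j) \in S) + ((vtxC i, vtxC j) \in S).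
Proof. by rewrite /cell_count !sum_ord3 !addnA. Qed.

(* The bit xy records whether (x_i, y_j) lies in S; the hypotheses are the domination
   constraints of (c_i, c_j), (b_i, c_j) and (c_i, b_j), and ea, ec stand for the
   neighbours of (c_i, a_j), (a_i, c_j) outside the cell. *)
Section BitCounting.
Variables aa ab ac ba bb bc ca cb cc : bool.
Hypotheses (hcc : bc || cb) (hbc : [|| ac, cc | bb]) (hcb : [|| bb, ca | cc]).

Lemma cell_bits_ge2 : 2 <= aa + ab + ac + ba + bb + bc + ca + cb + cc.
Proof.
by move: hcc hbc hcb; case: aa; case: ab; case: ac; case: ba; case: bb; case: bc;
  case: ca; case: cb; case: cc.
Qed.

Lemma cell_bits_ge3 : ac || ca -> 3 <= aa + ab + ac + ba + bb + bc + ca + cb + cc.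
Proof.
by move: hcc hbc hcb; case: aa; case: ab; case: ac; case: ba; case: bb; case: bc;
  case: ca; case: cb; case: cc.
Qed.

Lemma cell_bits_le2 (ea ec : bool) : [|| ba, cb | ea] -> [|| ab, bc | ec] ->
  aa + ab + ac + ba + bb + bc + ca + cb + cc <= 2 -> ea || ec.
Proof.
by move: hcc hbc hcb; case: aa; case: ab; case: ac; case: ba; case: bb; case: bc;
  case: ca; case: cb; case: cc; case: ea; case: ec.
Qed.
End BitCounting.

Lemma sum_rows_ge k n (b : 'I_k -> 'I_n -> bool) :
  (forall i, exists j, b i j) -> k <= \sum_i \sum_j b i j.
Proof.
move=> rows; apply: leq_trans (_ : \sum_(i < k) 1 <= _).
  by rewrite sum_nat_const card_ord muln1.
by apply: leq_sum => i _; have [j bij] := rows i; rewrite (bigD1 j) //= bij.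
Qed.

Lemma heavy_cells_ge k n (g : 'I_k -> 'I_n -> nat) (c : nat) : k <= n ->
  (forall i j, g i j <= c -> (exists i', c < g i' j) \/ (exists j', c < g i j')) ->
  k <= \sum_i \sum_j (c < g i j).
Proof.
move=> kn light; case: (boolP [forall i, exists j, c < g i j]).
  by move=> /forallP rows; apply: sum_rows_ge => i; apply/existsP.
rewrite negb_forall => /existsP[i0]; rewrite negb_exists => /forallP light_row.
rewrite exchange_big; apply: leq_trans kn (sum_rows_ge _) => j.
have : g i0 j <= c by rewrite leqNgt light_row.
case/light => [[i' heavy] | [j' heavy]]; first by exists i'.
by have := light_row j'; rewrite heavy.
Qed.

Lemma cell_matrix_sum_ge k n (g : 'I_k -> 'I_n -> nat) (c : nat) : k <= n ->
  (forall i j, c <= g i j) ->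
  (forall i j, g i j <= c -> (exists i', c < g i' j) \/ (exists j', c < g i j')) ->
  c * k * n + k <= \sum_i \sum_j g i j.
Proof.
move=> kn ge_c light.
apply: leq_trans (_ : \sum_i \sum_j (c + (c < g i j)) <= _); last first.
  apply: leq_sum => i _; apply: leq_sum => j _.
  by case: ltnP => /= [|_]; rewrite ?addn1 ?addn0 ?ge_c.
rewrite (eq_bigr (fun i => c * n + \sum_j (c < g i j))) => [|i _]; last first.
  by rewrite big_split /= sum_nat_const card_ord mulnC.
rewrite big_split /= sum_nat_const card_ord mulnA (mulnC k) leq_add2l.
exact: heavy_cells_ge.
Qed.

Section Domination.
Variables (k n : nat) (S : {set Gm_vertex k * Gm_vertex n}).
Hypothesis domS : total_dominating (cart_adj (@Gm_adj k) (@Gm_adj n)) S.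
Variables (i : 'I_k) (j : 'I_n).

Lemma dom_cc : ((vtxB i, vtxC j) \in S) || ((vtxC i, vtxB j) \in S).
Proof.
have [[p q] pqS] := total_dominatingP _ _ domS (vtxC i, vtxC j).
rewrite /cart_adj /= !Gm_adjC.
by case/orP=> /andP[/eqP ? /eqP ?]; subst; rewrite pqS ?orbT.
Qed.

Lemma dom_bc :
  [|| (vtxA i, vtxC j) \in S, (vtxC i, vtxC j) \in S | (vtxB i, vtxB j) \in S].
Proof.
have [[p q] pqS] := total_dominatingP _ _ domS (vtxB i, vtxC j).
rewrite /cart_adj /= Gm_adjC Gm_adjB.
by case/orP=> /andP[/eqP ?] => [/eqP ? | /orP[] /eqP ?]; subst; rewrite pqS ?orbT.
Qed.

Lemma dom_cb :
  [|| (vtxB i, vtxB j) \in S, (vtxC i, vtxA j) \in S | (vtxC i, vtxC j) \in S].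
Proof.
have [[p q] pqS] := total_dominatingP _ _ domS (vtxC i, vtxB j).
rewrite /cart_adj /= Gm_adjC Gm_adjB.
by case/orP=> /andP[/eqP ?] => [/orP[] /eqP ? | /eqP ?]; subst; rewrite pqS ?orbT.
Qed.

Lemma dom_ca :
  [|| (vtxB i, vtxA j) \in S, (vtxC i, vtxB j) \in S | [exists j', (vtxC i, vtxA j') \in S]].
Proof.
have [[p q] pqS] := total_dominatingP _ _ domS (vtxC i, vtxA j).
rewrite /cart_adj /= Gm_adjC Gm_adjA.
case/orP=> /andP[/eqP ?] => [/orP[/eqP ?|/existsP[j' /andP[_ /eqP ?]]] | /eqP ?];
  subst; rewrite ?pqS ?orbT //.
by apply/or3P/Or33/existsP; exists j'.
Qed.

Lemma dom_ac :
  [|| (vtxA i, vtxB j) \in S, (vtxB i, vtxC j) \in S | [exists i', (vtxA i', vtxC j) \in S]].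
Proof.
have [[p q] pqS] := total_dominatingP _ _ domS (vtxA i, vtxC j).
rewrite /cart_adj /= Gm_adjC Gm_adjA.
case/orP=> /andP[/eqP ?] => [/eqP ? | /orP[/eqP ?|/existsP[i' /andP[_ /eqP ?]]]];
  subst; rewrite ?pqS ?orbT //.
by apply/or3P/Or33/existsP; exists i'.
Qed.

End Domination.

Section LowerBound.
Variables (k n : nat) (S : {set Gm_vertex k * Gm_vertex n}).
Hypothesis domS : total_dominating (cart_adj (@Gm_adj k) (@Gm_adj n)) S.

Lemma cell_count_ge2 i j : 2 <= cell_count S i j.
Proof.
by rewrite cell_countE; apply: cell_bits_ge2; [exact: dom_cc | exact: dom_bc | exact: dom_cb].
Qed.

Lemma cell_count_gt2 i j :
  ((vtxA i, vtxC j) \in S) || ((vtxC i, vtxA j) \in S) -> 2 < cell_count S i j.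
Proof.
rewrite cell_countE; apply: cell_bits_ge3; [exact: dom_cc | exact: dom_bc | exact: dom_cb].
Qed.

Lemma light_cell_aligned_heavy i j : cell_count S i j <= 2 ->
  (exists i', 2 < cell_count S i' j) \/ (exists j', 2 < cell_count S i j').
Proof.
rewrite cell_countE => light.
have := cell_bits_le2 (dom_cc domS i j) (dom_bc domS i j) (dom_cb domS i j)
  (dom_ca domS i j) (dom_ac domS i j) light.
case/orP=> /existsP[l lS]; [right; exists l | left; exists l];
  by apply: cell_count_gt2; rewrite lS ?orbT.
Qed.

Lemma total_dominating_card_ge : k <= n -> 2 * k * n + k <= #|S|.
Proof.
move=> kn; rewrite card_cell_count; apply: cell_matrix_sum_ge => //.
- exact: cell_count_ge2.
- exact: light_cell_aligned_heavy.
Qed.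

End LowerBound.

Lemma exists_ord_neq m (i : 'I_m) : 1 < m -> exists i' : 'I_m, i' != i.
Proof.
move=> m_gt1; case: (eqVneq (val i) 0) => i0.
  by exists (Ordinal m_gt1); rewrite -val_eqE /= i0.
by exists (Ordinal (ltnW m_gt1)); rewrite -val_eqE /= eq_sym.
Qed.

Section UpperBound.
Variables (k n : nat) (j0 : 'I_n).

(* Through the clique of G_n, the vertices (a_i, a_j0) and (c_i, a_j0) also dominate
   (a_i, a_j) and (c_i, a_j) in the other columns, so there two vertices per cell suffice. *)
Definition tdset_cell (i : 'I_k) (j : 'I_n) : seq (Gm_vertex k * Gm_vertex n) :=
  if j == j0
  then [:: (vtxA i, vtxA j); (vtxA i, vtxC j); (vtxC i, vtxA j); (vtxC i, vtxB j)]
  else [:: (vtxB i, vtxB j); (vtxB i, vtxC j)].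

Definition tdset : {set Gm_vertex k * Gm_vertex n} :=
  [set v | v \in tdset_cell v.1.2 v.2.2].

Lemma tdset_total_dominating :
  1 < k -> total_dominating (cart_adj (@Gm_adj k) (@Gm_adj n)) tdset.
Proof.
move=> k_gt1; apply/total_dominatingP => -[p q].
have [o oi] := exists_ord_neq p.2 k_gt1.
have [qj0 | qj0] := eqVneq q.2 j0.
- case: (Gm_vertexP p) oi => i oi; case: (Gm_vertexP q) qj0 => j /= ->;
    [ exists (vtxA o, vtxA j0) | exists (vtxA i, vtxA j0) | exists (vtxA o, vtxC j0)
    | exists (vtxA i, vtxA j0) | exists (vtxC i, vtxB j0) | exists (vtxA i, vtxC j0)
    | exists (vtxC i, vtxB j0) | exists (vtxC i, vtxA j0) | exists (vtxC i, vtxB j0) ];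
    by rewrite ?inE /tdset_cell /cart_adj /Gm_adj /= ?eqxx /= ?in_cons ?eqxx
      ?[i == o]eq_sym ?oi ?orbT.
- case: (Gm_vertexP p) => i; case: (Gm_vertexP q) qj0 => j /= jj0;
    [ exists (vtxA i, vtxA j0) | exists (vtxB i, vtxB j) | exists (vtxB i, vtxC j)
    | exists (vtxB i, vtxB j) | exists (vtxB i, vtxC j) | exists (vtxB i, vtxB j)
    | exists (vtxC i, vtxA j0) | exists (vtxB i, vtxB j) | exists (vtxB i, vtxC j) ];
    by rewrite ?inE /tdset_cell /cart_adj /Gm_adj /= ?eqxx ?(negbTE jj0) /= ?in_cons
      ?eqxx ?[j0 == j]eq_sym ?jj0 ?orbT.
Qed.

Lemma cell_count_tdset i j : cell_count tdset i j = 2 + 2 * (j == j0).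
Proof.
rewrite cell_countE !inE /tdset_cell /=.
by case: eqP => _; rewrite !in_cons /vtxA /vtxB /vtxC !xpair_eqE /= ?eqxx.
Qed.

Lemma card_tdset : #|tdset| = 2 * k * n + 2 * k.
Proof.
rewrite card_cell_count (eq_bigr (fun=> 2 * n + 2)) => [|i _]; last first.
  rewrite (eq_bigr _ (fun j _ => cell_count_tdset i j)) big_split /= sum_nat_const card_ord.
  rewrite (bigD1 j0) //= eqxx big1 => [|j /negbTE-> //].
  by rewrite /= muln1 addn0 mulnC.
by rewrite sum_nat_const card_ord mulnDr mulnA !(mulnC k).
Qed.
End UpperBound.

Theorem proposition5 (k n : nat) :
  2 <= k -> k <= n ->
  2 * k * n + k <= gamma_t (cart_adj (@Gm_adj k) (@Gm_adj n)) <= 2 * k * n + 2 * k.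
Proof.
move=> k_ge2 kn; pose j0 : 'I_n := Ordinal (leq_trans (ltnW k_ge2) kn).
have domS0 := tdset_total_dominating j0 k_ge2.
apply/andP; split.
- apply: gamma_t_ge domS0 _ => S domS; exact: total_dominating_card_ge.
- by rewrite -(card_tdset k j0) gamma_t_le.
Qed.
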